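(* Assume the Setting below. Let $\gamma_1,\dots,\gamma_c\in\mathbb R^d$ be server vectors with fixed vectors $\mathbb E\gamma_1,\dots,\mathbb E\gamma_c$, and suppose that for every $i\in\mathcal H$ there is a probability vector $(p_{i1},\dots,p_{ic})$ with $\mathbb Eg_i=\sum_{z=1}^cp_{iz}\mathbb E\gamma_z$. Let $\hat{\mathcal P}_0$ be an affine subspace containing $\gamma_1,\dots,\gamma_c$, and let $\hat{\mathcal P}$ be any affine subspace with $\ell_t(\hat{\mathcal P})\le\ell_t(\hat{\mathcal P}_0)$. Then $$\ell_t(\hat{\mathcal P})\le\frac{2(n-f)}{|\mathcal H|}\Big(\sum_{i\in\mathcal H}\|g_i-\mathbb Eg_i\|_2^2+\sum_{i\in\mathcal H}\sum_{z=1}^cp_{iz}\|\mathbb E\gamma_z-\gamma_z\|_2^2\Big).$$ Consequently, if $\mathbb E\|g_i-\mathbb Eg_i\|_2^2\le\epsilon^2$ for $i\in\mathcal H$ and $\mathbb E\|\gamma_z-\mathbb E\gamma_z\|_2^2\le\epsilon_s^2$ for all $z$, then $\mathbb E\,\ell_t(\hat{\mathcal P})\le2(n-f)(\epsilon^2+\epsilon_s^2)$.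
   Context: Setting: let $n,f,c,d$ be positive integers with $c\ge2$, $d\ge c$, $n-2f\ge1$. The index set $\{1,\dots,n\}$ is partitioned as $\mathcal H\sqcup\mathcal B$ (honest and Byzantine clients) with $|\mathcal B|\le f$. Each client $i$ has a vector $g_i\in\mathbb R^d$; for $i\in\mathcal H$, $\mathbb Eg_i\in\mathbb R^d$ denotes a fixed vector (the expectation of $g_i$), and $\mathbb E\mu=\frac1{|\mathcal H|}\sum_{i\in\mathcal H}\mathbb Eg_i$. A $k$-dimensional affine subspace is $\mathcal P=\{U\lambda+m:\lambda\in\mathbb R^k\}$ with $U\in\mathbb R^{d\times k}$ having orthonormal columns and $m\in\mathbb R^d$; its orthogonal projection is $\Pi_{\mathcal P}(w)=UU^\top(w-m)+m$. The trimmed reconstruction loss of an affine subspace $\mathcal P$ is $\ell_t(\mathcal P)=\min_{S\subseteq\{1,\dots,n\},\,|S|=n-f}\sum_{i\in S}\|g_i-\Pi_{\mathcal P}(g_i)\|_2^2$. (In the algorithm, $\hat{\mathcal P}_0$ is the affine subspace fitted to the server vectors by truncated SVD, and $\hat{\mathcal P}$ results from alternating minimization, which does not increase $\ell_t$.) *)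

From HB Require Import structures.
From mathcomp Require Import all_boot all_order all_algebra.
From mathcomp Require Import all_classical all_reals all_analysis.
Set Implicit Arguments. Unset Strict Implicit. Unset Printing Implicit Defensive.
Import Order.TTheory GRing.Theory Num.Theory.
Local Open Scope ring_scope.

Definition sqnorm (R : realType) (d : nat) (v : 'cV[R]_d) : R :=
  \sum_(j < d) (v j 0) ^+ 2.

(* A k-dimensional affine subspace P = {U lambda + m : lambda in R^k},
   U in R^{d x k} with orthonormal columns, m in R^d. *)
Record affsub (R : realType) (d : nat) := AffSub {
  as_k : nat;
  as_U : 'M[R]_(d, as_k);
  as_m : 'cV[R]_d;
  as_orth : as_U^T *m as_U = 1%:M }.

Definition in_affsub (R : realType) (d : nat) (P : affsub R d) (w : 'cV[R]_d) : Prop :=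
  exists lam : 'cV[R]_(as_k P), w = as_U P *m lam + as_m P.

Definition proj_affsub (R : realType) (d : nat) (P : affsub R d) (w : 'cV[R]_d) : 'cV[R]_d :=
  as_U P *m (as_U P)^T *m (w - as_m P) + as_m P.

Definition resid_sum (R : realType) (n d : nat) (g : 'I_n -> 'cV[R]_d)
  (P : affsub R d) (S : {set 'I_n}) : R :=
  \sum_(i in S) sqnorm (g i - proj_affsub P (g i)).

(* a fixed subset of 'I_n of cardinality n - f (used only as the
   starting point of the arg min; it satisfies the constraint) *)
Definition first_set (n f : nat) : {set 'I_n} := [set i : 'I_n | (i < n - f)%N].

(* trimmed reconstruction loss
   l_t(P) = min_{S subset {1..n}, |S| = n - f} sum_{i in S} ||g_i - Pi_P(g_i)||^2 *)
Definition trimmed_loss (R : realType) (n f d : nat) (g : 'I_n -> 'cV[R]_d)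
  (P : affsub R d) : R :=
  resid_sum g P
    (Order.arg_min (first_set n f) (fun S : {set 'I_n} => #|S| == (n - f)%N)
       (resid_sum g P)).

(* Since Phat is no worse than P0, it suffices to bound the trimmed loss of P0.
   Averaging over the honest clients yields an (n - f)-subset whose residual sum
   is at most (n - f)/|H| times the honest residual sum.  For an honest i the
   point q_i = sum_z p_iz gam_z is an affine combination of points of P0, hence
   lies in P0, so the residual of g_i is at most ||g_i - q_i||^2
   <= 2 ||g_i - E g_i||^2 + 2 ||E g_i - q_i||^2, and Jensen's inequality bounds
   the last term by 2 sum_z p_iz ||E gam_z - gam_z||^2.  The bound in
   expectation follows by linearity, since sum_(i in H) p_iz summed over z is |H|. *)

From mathcomp Require Import zify.
From HB Require Import structures.
From mathcomp Require Import all_boot all_order all_algebra.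
From mathcomp Require Import all_classical all_reals all_analysis.
From mathcomp Require Import ring lra measurable_realfun.
Import Order.TTheory GRing.Theory Num.Theory.
Local Open Scope ring_scope.

Section SquaredNorm.
Context {R : realType} {d : nat}.
Implicit Types (a b v : 'cV[R]_d).

Lemma sqnorm_ge0 v : 0 <= sqnorm v.
Proof. by apply: sumr_ge0 => j _; apply: sqr_ge0. Qed.

Lemma sqnormD a b : sqnorm (a + b) = sqnorm a + sqnorm b + 2 * (a^T *m b) 0 0.
Proof.
rewrite /sqnorm mxE mulr_sumr -!big_split /=; apply: eq_bigr => j _.
by rewrite !mxE; ring.
Qed.

Lemma sqnorm_subC a b : sqnorm (a - b) = sqnorm (b - a).
Proof. by apply: eq_bigr => j _; rewrite !mxE; ring. Qed.

Lemma sqnormD_le a b : sqnorm (a + b) <= 2 * sqnorm a + 2 * sqnorm b.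
Proof.
rewrite /sqnorm !mulr_sumr -big_split /=; apply: ler_sum => j _.
by rewrite !mxE; have := sqr_ge0 (a j 0 - b j 0); nra.
Qed.

Lemma sqr_convex_sum (I : finType) (p x : I -> R) :
  (forall z, 0 <= p z) -> \sum_z p z = 1 ->
  (\sum_z p z * x z) ^+ 2 <= \sum_z p z * x z ^+ 2.
Proof.
move=> p_ge0 p_sum1; set mu := \sum_z p z * x z.
have variance_ge0 : 0 <= \sum_z p z * (x z - mu) ^+ 2.
  by apply: sumr_ge0 => z _; apply: mulr_ge0 => //; apply: sqr_ge0.
have variance_expand : \sum_z p z * (x z - mu) ^+ 2 =
    \sum_z p z * x z ^+ 2 - 2 * mu * mu + mu ^+ 2 * \sum_z p z.
  rewrite (eq_bigr (fun z => p z * x z ^+ 2 - 2 * mu * (p z * x z) + mu ^+ 2 * p z));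
    last by move=> z _; ring.
  by rewrite big_split sumrB /= -!mulr_sumr.
by move: variance_ge0; rewrite variance_expand p_sum1; lra.
Qed.

Lemma sqnorm_convex_sum (I : finType) (p : I -> R) (v : I -> 'cV[R]_d) :
  (forall z, 0 <= p z) -> \sum_z p z = 1 ->
  sqnorm (\sum_z p z *: v z) <= \sum_z p z * sqnorm (v z).
Proof.
move=> p_ge0 p_sum1; rewrite /sqnorm.
under [X in _ <= X]eq_bigr do rewrite mulr_sumr.
rewrite exchange_big /=; apply: ler_sum => j _.
rewrite summxE (eq_bigr (fun z => p z * v z j 0)) => [|z _]; last by rewrite mxE.
exact: sqr_convex_sum.
Qed.

End SquaredNorm.

Section AffineSubspace.
Context {R : realType} {d : nat} (P : affsub R d).

Lemma in_affsub_affine_comb (I : finType) (p : I -> R) (v : I -> 'cV[R]_d) :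
  (forall z, in_affsub P (v z)) -> \sum_z p z = 1 ->
  in_affsub P (\sum_z p z *: v z).
Proof.
move=> /choice[lam v_lam] p_sum1; exists (\sum_z p z *: lam z).
have -> : as_m P = \sum_z p z *: as_m P by rewrite -scaler_suml p_sum1 scale1r.
rewrite mulmx_sumr -big_split /=; apply: eq_bigr => z _.
by rewrite v_lam scalerDr -scalemxAr.
Qed.

Lemma proj_affsub_orth w : (as_U P)^T *m (w - proj_affsub P w) = 0.
Proof.
rewrite /proj_affsub (_ : w - _ = (w - as_m P) - as_U P *m (as_U P)^T *m (w - as_m P)).
  by rewrite mulmxBr !mulmxA as_orth mul1mx subrr.
by apply/matrixP => i j; rewrite !mxE; ring.
Qed.

(* Pythagoras: [w - q] splits into the residual and a vector of the direction space. *)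
Lemma proj_affsub_min w {q} :
  in_affsub P q -> sqnorm (w - proj_affsub P w) <= sqnorm (w - q).
Proof.
case=> lam ->; set r := w - proj_affsub P w.
have -> : w - (as_U P *m lam + as_m P) =
    r + as_U P *m ((as_U P)^T *m (w - as_m P) - lam).
  by rewrite mulmxBr mulmxA; apply/matrixP => i j; rewrite !mxE; ring.
rewrite sqnormD mulmxA.
have -> : r^T *m as_U P = ((as_U P)^T *m r)^T by rewrite trmx_mul trmxK.
by rewrite proj_affsub_orth trmx0 mul0mx mxE mulr0 addr0 lerDl sqnorm_ge0.
Qed.

End AffineSubspace.

(* Removing a largest element keeps the average from increasing. *)
Lemma subset_avg_le {R : realFieldType} {T : finType} (a : T -> R) (k : nat)
    (A : {set T}) :
  (k <= #|A|)%N ->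
  exists2 S : {set T}, #|S| = k &
    #|A|%:R * \sum_(i in S) a i <= k%:R * \sum_(i in A) a i.
Proof.
have [->|k_gt0] := posnP k.
  by exists finset.set0; rewrite ?cards0 // big_set0 mulr0 mul0r.
move A_card: #|A| => m; elim: m A A_card => [|m IH] A A_card k_le; first lia.
have [->|k_neq] := eqVneq k m.+1; first by exists A.
have k_le_m : (k <= m)%N by lia.
have /card_gt0P[x0 x0A] : (0 < #|A|)%N by rewrite A_card.
have [x xA x_max] := @arg_maxP _ _ _ x0 (fun i => i \in A) a x0A.
have Ax_card : #|A :\ x| = m by move: A_card; rewrite (cardsD1 x) xA => -[].
have [S S_card S_avg] := IH _ Ax_card k_le_m.
exists S => //; rewrite (big_setD1 x xA) /=.
have rest_le : \sum_(i in A :\ x) a i <= m%:R * a x.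
  rewrite -Ax_card -sum1_card natr_sum mulr_suml; apply: ler_sum => i.
  by rewrite in_setD1 mul1r => /andP[_ /x_max].
have m_gt0 : (0 : R) < m%:R by rewrite ltr0n; lia.
rewrite -(ler_pM2l m_gt0) -natr1.
have := ler_wpM2l (ler0n R m.+1) S_avg; have := ler_wpM2l (ler0n R k) rest_le.
rewrite -natr1; nra.
Qed.

Lemma card_first_set n f : #|first_set n f| = (n - f)%N.
Proof.
have nf_le : (n - f <= n)%N by rewrite leq_subr.
have -> : first_set n f = [set widen_ord nf_le x | x in 'I_(n - f)].
  apply/setP => i; rewrite /first_set inE; apply/idP/imsetP => [i_lt|[x _ ->]].
    by exists (Ordinal i_lt) => //; apply: val_inj.
  by rewrite /= ltn_ord.
by rewrite card_imset ?card_ord // => x y /(congr1 val) /= /val_inj.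
Qed.

Lemma trimmed_loss_le {R : realType} {n f d : nat} (g : 'I_n -> 'cV[R]_d) P
    (S : {set 'I_n}) :
  #|S| = (n - f)%N -> trimmed_loss f g P <= resid_sum g P S.
Proof.
move=> S_card; rewrite /trimmed_loss.
case: arg_minP => [|S0 _ S0_min]; first by rewrite card_first_set.
by apply: S0_min; rewrite S_card.
Qed.

Lemma trimmed_loss_ge0 {R : realType} {n f d : nat} (g : 'I_n -> 'cV[R]_d) P :
  0 <= trimmed_loss f g P.
Proof. by apply: sumr_ge0 => i _; apply: sqnorm_ge0. Qed.

Section DeterministicBound.
Context {R : realType} {n f c d : nat} {H : {set 'I_n}}.
Context {g Eg : 'I_n -> 'cV[R]_d} {gam Egam : 'I_c -> 'cV[R]_d}.
Context {p : 'I_n -> 'I_c -> R}.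
Hypothesis p_ge0 : forall i, i \in H -> forall z, 0 <= p i z.
Hypothesis p_sum1 : forall i, i \in H -> \sum_(z < c) p i z = 1.
Hypothesis Eg_mixture : forall i, i \in H -> Eg i = \sum_(z < c) p i z *: Egam z.

Lemma honest_resid_le (P0 : affsub R d) i : i \in H ->
  (forall z, in_affsub P0 (gam z)) ->
  sqnorm (g i - proj_affsub P0 (g i)) <=
    2 * sqnorm (g i - Eg i) + 2 * \sum_(z < c) p i z * sqnorm (Egam z - gam z).
Proof.
move=> iH gam_in; set q := \sum_(z < c) p i z *: gam z.
have q_in : in_affsub P0 q by apply: in_affsub_affine_comb; last exact: p_sum1.
apply: le_trans (proj_affsub_min P0 (g i) q_in) _.
have -> : g i - q = (g i - Eg i) + (Eg i - q) by rewrite addrA subrK.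
apply: le_trans (sqnormD_le _ _) _; rewrite lerD2l ler_wpM2l //.
have -> : Eg i - q = \sum_(z < c) p i z *: (Egam z - gam z).
  by rewrite Eg_mixture // -sumrB; apply: eq_bigr => z _; rewrite scalerBr.
by apply: sqnorm_convex_sum; [apply: p_ge0 | apply: p_sum1].
Qed.

Lemma trimmed_loss_bound (P0 Phat : affsub R d) :
  (0 < #|H|)%N -> (n - f <= #|H|)%N ->
  (forall z, in_affsub P0 (gam z)) ->
  trimmed_loss f g Phat <= trimmed_loss f g P0 ->
  trimmed_loss f g Phat <=
    2 * (n - f)%:R / #|H|%:R *
    (\sum_(i in H) sqnorm (g i - Eg i)
     + \sum_(i in H) \sum_(z < c) p i z * sqnorm (Egam z - gam z)).
Proof.
move=> H_gt0 nf_le gam_in Phat_le; apply: le_trans Phat_le _.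
set a := fun i => sqnorm (g i - proj_affsub P0 (g i)).
have [S S_card S_avg] := subset_avg_le a (n - f) H nf_le.
apply: le_trans (trimmed_loss_le g P0 S S_card) _.
have H_pos : (0 : R) < #|H|%:R by rewrite ltr0n.
have avg_le : resid_sum g P0 S <= (n - f)%:R / #|H|%:R * \sum_(i in H) a i.
  by rewrite mulrAC ler_pdivlMr // mulrC.
apply: le_trans avg_le _.
rewrite [2 * _]mulrC -!mulrA ler_wpM2l // mulrCA ler_wpM2l ?invr_ge0 //.
rewrite mulrDr !mulr_sumr -big_split /=.
by apply: ler_sum => i iH; apply: honest_resid_le.
Qed.

Lemma trimmed_loss_bound_regrouped (P0 Phat : affsub R d) :
  (0 < #|H|)%N -> (n - f <= #|H|)%N ->
  (forall z, in_affsub P0 (gam z)) ->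
  trimmed_loss f g Phat <= trimmed_loss f g P0 ->
  trimmed_loss f g Phat <=
    \sum_(i in H) 2 * (n - f)%:R / #|H|%:R * sqnorm (g i - Eg i)
    + \sum_(z < c) 2 * (n - f)%:R / #|H|%:R * (\sum_(i in H) p i z)
        * sqnorm (gam z - Egam z).
Proof.
move=> H_gt0 nf_le gam_in Phat_le.
apply: le_trans (trimmed_loss_bound P0 Phat H_gt0 nf_le gam_in Phat_le) _.
rewrite mulrDr mulr_sumr lerD2l exchange_big /= mulr_sumr; apply: ler_sum => z _.
by rewrite -[X in _ <= X]mulrA mulr_suml sqnorm_subC.
Qed.

End DeterministicBound.

Section Expectation.
Context {d0 : measure_display} {T : measurableType d0} {R : realType}.
Variable Pr : probability T R.

Lemma measurable_sqnorm_sub {d : nat} (v : T -> 'cV[R]_d) (a : 'cV[R]_d) :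
  (forall j, measurable_fun setT (fun w => v w j 0)) ->
  measurable_fun setT (fun w => sqnorm (v w - a)).
Proof.
move=> v_meas; apply: measurable_sum => j.
rewrite (_ : (fun _ => _) = (fun w => (v w j 0 - a j 0) ^+ 2)); last first.
  by apply/funext => w; rewrite !mxE.
by apply/measurable_funX/measurable_funB.
Qed.

Lemma ge0_integral_leD {u v v' : T -> R} :
  measurable_fun setT u -> measurable_fun setT v -> measurable_fun setT v' ->
  (forall w, 0 <= u w) -> (forall w, 0 <= v w) -> (forall w, 0 <= v' w) ->
  (forall w, u w <= v w + v' w) ->
  (\int[Pr]_w (u w)%:E <= \int[Pr]_w (v w)%:E + \int[Pr]_w (v' w)%:E)%E.
Proof.
move=> u_meas v_meas v'_meas u_ge0 v_ge0 v'_ge0 u_le.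
rewrite -ge0_integralD //; try by [move=> w _; rewrite lee_fin | apply/measurable_EFinP].
apply: ge0_le_integral => //.
- by move=> w _; rewrite lee_fin.
- exact/measurable_EFinP.
- by apply: emeasurable_funD; apply/measurable_EFinP.
- by move=> w _; rewrite lee_fin.
Qed.

Lemma measurable_weighted_sum (I : finType) (P : pred I) (c : I -> R)
    (h : I -> T -> R) :
  (forall i, measurable_fun setT (h i)) ->
  measurable_fun setT (fun w => \sum_(i | P i) c i * h i w).
Proof.
move=> h_meas; under eq_fun do rewrite big_mkcond /=.
apply: measurable_sum => i; case: (P i) => //.
exact: measurable_funM.
Qed.

Lemma integral_weighted_sum_le {I : finType} {P : pred I} {c b : I -> R}
    {h : I -> T -> R} :
  (forall i, 0 <= c i) -> (forall i, measurable_fun setT (h i)) ->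
  (forall i w, 0 <= h i w) ->
  (forall i, P i -> (\int[Pr]_w (h i w)%:E <= (b i)%:E)%E) ->
  (\int[Pr]_w (\sum_(i | P i) c i * h i w)%:E
     <= (\sum_(i | P i) c i * b i)%:E)%E.
Proof.
move=> c_ge0 h_meas h_ge0 h_int.
under eq_integral do rewrite -sumEFin big_mkcond /=.
rewrite ge0_integral_sum //; last first.
- by move=> i w _; case: (P i); rewrite // lee_fin mulr_ge0.
- by move=> i; case: (P i) => //; apply/measurable_EFinP/measurable_funM.
rewrite -sumEFin [X in (_ <= X)%E]big_mkcond /=; apply: lee_sum => i _.
case: (boolP (P i)) => [Pi|_]; last by rewrite integral0.
under eq_integral do rewrite EFinM.
rewrite ge0_integralZl_EFin // => [|w _|]; last exact/measurable_EFinP.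
- by rewrite EFinM lee_wpmul2l ?lee_fin // h_int.
- by rewrite lee_fin.
Qed.

Lemma expected_trimmed_loss_bound {n f c d : nat} (H : {set 'I_n})
    (g : T -> 'I_n -> 'cV[R]_d) (Eg : 'I_n -> 'cV[R]_d)
    (gam : T -> 'I_c -> 'cV[R]_d) (Egam : 'I_c -> 'cV[R]_d)
    (p : 'I_n -> 'I_c -> R) (P0 Phat : T -> affsub R d) (eps eps_s : R) :
  (0 < #|H|)%N -> (n - f <= #|H|)%N ->
  (forall i j, measurable_fun setT (fun w => g w i j 0)) ->
  (forall z j, measurable_fun setT (fun w => gam w z j 0)) ->
  measurable_fun setT (fun w => trimmed_loss f (g w) (Phat w)) ->
  (forall i, i \in H -> forall z, 0 <= p i z) ->
  (forall i, i \in H -> \sum_(z < c) p i z = 1) ->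
  (forall i, i \in H -> Eg i = \sum_(z < c) p i z *: Egam z) ->
  (forall w z, in_affsub (P0 w) (gam w z)) ->
  (forall w, trimmed_loss f (g w) (Phat w) <= trimmed_loss f (g w) (P0 w)) ->
  (forall i, i \in H ->
     (\int[Pr]_w (sqnorm (g w i - Eg i))%:E <= (eps ^+ 2)%:E)%E) ->
  (forall z, (\int[Pr]_w (sqnorm (gam w z - Egam z))%:E <= (eps_s ^+ 2)%:E)%E) ->
  (\int[Pr]_w (trimmed_loss f (g w) (Phat w))%:E
     <= (2 * (n - f)%:R * (eps ^+ 2 + eps_s ^+ 2))%:E)%E.
Proof.
move=> H_gt0 nf_le g_meas gam_meas loss_meas p_ge0 p_sum1 Eg_mix gam_in
  Phat_le g_int gam_int.
pose K : R := 2 * (n - f)%:R / #|H|%:R.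
have K_ge0 : 0 <= K by rewrite divr_ge0 ?mulr_ge0.
pose wH z := \sum_(i in H) p i z.
have wH_ge0 z : 0 <= wH z by apply: sumr_ge0 => i /p_ge0.
have wH_sum : \sum_(z < c) wH z = #|H|%:R.
  rewrite exchange_big /= (eq_bigr (fun=> 1)) => [|i /p_sum1 //].
  by rewrite sumr_const -mulr_natl mulr1.
pose hg i w := sqnorm (g w i - Eg i).
pose hgam z w := sqnorm (gam w z - Egam z).
have hg_meas i : measurable_fun setT (hg i) by apply: measurable_sqnorm_sub.
have hgam_meas z : measurable_fun setT (hgam z) by apply: measurable_sqnorm_sub.
pose F w := \sum_(i in H) K * hg i w.
pose G w := \sum_(z < c) K * wH z * hgam z w.
have loss_le w : trimmed_loss f (g w) (Phat w) <= F w + G w.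
  exact: trimmed_loss_bound_regrouped p_ge0 p_sum1 Eg_mix (P0 w) (Phat w) H_gt0 nf_le
    (gam_in w) (Phat_le w).
have F_ge0 w : 0 <= F w by apply: sumr_ge0 => i _; rewrite mulr_ge0 ?sqnorm_ge0.
have G_ge0 w : 0 <= G w by apply: sumr_ge0 => z _; rewrite !mulr_ge0 ?sqnorm_ge0.
have F_meas : measurable_fun setT F by apply: measurable_weighted_sum.
have G_meas : measurable_fun setT G by apply: measurable_weighted_sum.
apply: le_trans (ge0_integral_leD loss_meas F_meas G_meas
  (fun w => trimmed_loss_ge0 _ _) F_ge0 G_ge0 loss_le) _.
have F_int := integral_weighted_sum_le (fun=> K_ge0) hg_meas
  (fun i w => sqnorm_ge0 _) g_int.
have G_int := integral_weighted_sum_le (fun z => mulr_ge0 K_ge0 (wH_ge0 z))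
  hgam_meas (fun z w => sqnorm_ge0 _) (fun z (_ : predT z) => gam_int z).
apply: le_trans (leeD F_int G_int) _; rewrite -EFinD lee_fin.
rewrite sumr_const -mulr_natr; under eq_bigr do rewrite mulrAC.
rewrite -mulr_sumr wH_sum /K le_eqVlt; apply/orP; left.
have H_neq0 : (#|H|%:R : R) != 0 by rewrite pnatr_eq0 -lt0n.
by apply/eqP; field.
Qed.

End Expectation.

Theorem mainTheorem7 (R : realType) (n f c d : nat)
  (f_gt0 : (0 < f)%N) (c_ge2 : (2 <= c)%N) (d_ge_c : (c <= d)%N)
  (nf_ge1 : (1 <= n - 2 * f)%N)
  (H : {set 'I_n}) (HB : (#|~: H| <= f)%N) :
  (* deterministic bound *)
  (forall (g Eg : 'I_n -> 'cV[R]_d) (gam Egam : 'I_c -> 'cV[R]_d)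
          (p : 'I_n -> 'I_c -> R) (P0 Phat : affsub R d),
     (forall i, i \in H -> forall z, 0 <= p i z) ->
     (forall i, i \in H -> \sum_(z < c) p i z = 1) ->
     (forall i, i \in H -> Eg i = \sum_(z < c) p i z *: Egam z) ->
     (forall z, in_affsub P0 (gam z)) ->
     trimmed_loss f g Phat <= trimmed_loss f g P0 ->
     trimmed_loss f g Phat <=
       2 * (n - f)%:R / #|H|%:R *
       (\sum_(i in H) sqnorm (g i - Eg i)
        + \sum_(i in H) \sum_(z < c) p i z * sqnorm (Egam z - gam z))) /\
  (* consequence in expectation *)
  (forall (d0 : measure_display) (T : measurableType d0)
          (Pr : probability T R)
          (g : T -> 'I_n -> 'cV[R]_d) (Eg : 'I_n -> 'cV[R]_d)
          (gam : T -> 'I_c -> 'cV[R]_d) (Egam : 'I_c -> 'cV[R]_d)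
          (p : 'I_n -> 'I_c -> R) (P0 Phat : T -> affsub R d) (eps eps_s : R),
     (forall i j, measurable_fun setT (fun w => g w i j 0)) ->
     (forall z j, measurable_fun setT (fun w => gam w z j 0)) ->
     measurable_fun setT (fun w => trimmed_loss f (g w) (Phat w)) ->
     (forall i, i \in H -> forall z, 0 <= p i z) ->
     (forall i, i \in H -> \sum_(z < c) p i z = 1) ->
     (forall i, i \in H -> Eg i = \sum_(z < c) p i z *: Egam z) ->
     (forall w z, in_affsub (P0 w) (gam w z)) ->
     (forall w, trimmed_loss f (g w) (Phat w) <= trimmed_loss f (g w) (P0 w)) ->
     (forall i, i \in H ->
        (\int[Pr]_w (sqnorm (g w i - Eg i))%:E <= (eps ^+ 2)%:E)%E) ->
     (forall z,
        (\int[Pr]_w (sqnorm (gam w z - Egam z))%:E <= (eps_s ^+ 2)%:E)%E) ->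
     (\int[Pr]_w (trimmed_loss f (g w) (Phat w))%:E
        <= (2 * (n - f)%:R * (eps ^+ 2 + eps_s ^+ 2))%:E)%E).
Proof.
have H_card : (#|H| + #|~: H| = n)%N by rewrite cardsC card_ord.
have nf_le : (n - f <= #|H|)%N by lia.
have H_gt0 : (0 < #|H|)%N by lia.
split=> [g Eg gam Egam p P0 Phat p_ge0 p_sum1 Eg_mix|d0 T Pr g Eg gam Egam p P0 Phat eps eps_s].
  exact: trimmed_loss_bound.
exact: (expected_trimmed_loss_bound Pr H g Eg gam Egam p P0 Phat eps eps_s H_gt0 nf_le).
Qed.
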